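(* Let $S$ be a numerical semigroup with minimal generators $e<a_1<\dots<a_t$ and blowup $B$. Then ${\rm adj}(S)$ is finite, and $\operatorname{Ap}(B;e)\subseteq{\rm adj}(S)\subseteq B$.
   Context: A numerical semigroup is a submonoid of $(\mathbb N,+)$ with finite complement. ${\rm ord}(n;S)$ is the maximum of $\sum c_i$ over $(c_0,\dots,c_t)\in\mathbb N^{t+1}$ with $c_0e+\sum c_ia_i=n$. The blowup is $B=\langle e,a_1-e,\dots,a_t-e\rangle$. $\operatorname{Ap}(B;e)=\{w\in B:w-e\notin B\}$. ${\rm adj}(S)=\{s-{\rm ord}(s;S)e: s\in S\}$. *)

From mathcomp Require Import all_boot.
Set Implicit Arguments. Unset Strict Implicit. Unset Printing Implicit Defensive.

Definition lincomb (c g : seq nat) : nat :=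
  \sum_(i < size g) nth 0 c i * nth 0 g i.

Definition factorization (g : seq nat) (n : nat) (c : seq nat) : Prop :=
  size c = size g /\ lincomb c g = n.

Definition gen (g : seq nat) (n : nat) : Prop := exists c, factorization g n c.

Definition numerical_semigroup (S : nat -> Prop) : Prop :=
  [/\ S 0, (forall x y, S x -> S y -> S (x + y)) &
      exists N, forall n, N <= n -> S n].

Definition drop_nth (i : nat) (g : seq nat) : seq nat := take i g ++ drop i.+1 g.

Definition minimal_generators (S : nat -> Prop) (g : seq nat) : Prop :=
  [/\ sorted ltn g, (forall n, S n <-> gen g n) &
      forall i, i < size g -> ~ gen (drop_nth i g) (nth 0 g i)].

Definition is_ord (e : nat) (a : seq nat) (n k : nat) : Prop :=
  (exists c, factorization (e :: a) n c /\ sumn c = k) /\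
  (forall c, factorization (e :: a) n c -> sumn c <= k).

Definition blowup (e : nat) (a : seq nat) : nat -> Prop :=
  gen (e :: [seq x - e | x <- a]).

(* Apery set Ap(B; e) = { w in B : w - e notin B } (w - e taken in Z) *)
Definition apery (B : nat -> Prop) (e : nat) (w : nat) : Prop :=
  B w /\ ~ (e <= w /\ B (w - e)).

Definition adj (S : nat -> Prop) (e : nat) (a : seq nat) (x : nat) : Prop :=
  exists s k, S s /\ is_ord e a s k /\ x = s - k * e.

From mathcomp Require Import all_boot.
From mathcomp Require Import zify.

Set Implicit Arguments.
Unset Strict Implicit.
Unset Printing Implicit Defensive.

(** Since every generator is at least [e], a factorization [c] of [s] in
    [e, a_1, ..., a_t] rewrites as [s = (sum c) e + sum_i c_i (a_i - e)], so
    [s - ord(s) e] lies in the blowup [B]. Conversely, an element [w] of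
    [Ap(B; e)] has a factorization in [B] avoiding [e]; lifting it gives an
    [s] in [S] with [w = s - k e], and any factorization of [s] of length
    [> k] would put [w - e] in [B]. Finiteness of [adj(S)]: if
    [s - ord(s) e] reached the conductor plus [e], then [s - (ord(s) + 1) e]
    would lie in [S] and yield a longer factorization of [s]. *)

Lemma lincomb_cons x c y g : lincomb (x :: c) (y :: g) = x * y + lincomb c g.
Proof. by rewrite /lincomb /= big_ord_recl. Qed.

Lemma lincomb_subn e c g :
    size c = size g -> {in g, forall x, e <= x} ->
  lincomb c g = sumn c * e + lincomb c [seq x - e | x <- g].
Proof.
elim: g c => [|y g IHg] [|x c] //= [size_c] ge_g.
have ge_y : e <= y by apply: ge_g; rewrite inE eqxx.
rewrite !lincomb_cons IHg // => [|z g_z]; last by apply: ge_g; rewrite inE g_z orbT.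
have -> : y = e + (y - e) by lia.
rewrite addKn; nia.
Qed.

Lemma factorization_cons x g n c0 c :
  factorization (x :: g) n (c0 :: c) <-> size c = size g /\ n = c0 * x + lincomb c g.
Proof.
rewrite /factorization lincomb_cons /=.
by split=> [[[size_c] ->] | [size_c ->]]; rewrite ?size_c.
Qed.

Lemma factorization_add_head x g n c0 c m :
    factorization (x :: g) n (c0 :: c) ->
  factorization (x :: g) (n + m * x) ((c0 + m) :: c).
Proof. by move=> /factorization_cons[size_c ->]; apply/factorization_cons; split=> //; nia. Qed.

Lemma gen_add_head x g n m : gen (x :: g) n -> gen (x :: g) (n + m * x).
Proof.
case=> -[|c0 c] fact_n; first by case: fact_n.
by exists ((c0 + m) :: c); apply: factorization_add_head.
Qed.

Section Blowup.

Variables (e : nat) (a : seq nat).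
Hypothesis ge_a : {in a, forall x, e <= x}.

Lemma factorization_blowup s c :
  factorization (e :: a) s c -> sumn c * e <= s /\ blowup e a (s - sumn c * e).
Proof.
case: c => [|c0 c]; first by case.
move=> /factorization_cons[size_c ->]; rewrite /= (lincomb_subn size_c ge_a).
split; first by nia.
exists (0 :: c); apply/factorization_cons; rewrite size_map; split=> //; nia.
Qed.

Lemma is_ord_sub_blowup s k : is_ord e a s k -> blowup e a (s - k * e).
Proof. by case=> -[c [fact_s <-]] _; case: (factorization_blowup fact_s). Qed.

Lemma apery_blowup_factorization w :
    apery (blowup e a) e w ->
  exists2 d, size d = size a & w = lincomb d [seq x - e | x <- a].
Proof.
case=> -[[|d0 d] fact_w] not_wBe; first by case: fact_w.
move/factorization_cons: fact_w; rewrite size_map => -[size_d def_w].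
case: d0 def_w => [|d0] def_w; first by exists d.
case: not_wBe; split; first by nia.
by exists (d0 :: d); apply/factorization_cons; rewrite size_map; split=> //; nia.
Qed.

Lemma is_ord_apery d :
    size d = size a -> apery (blowup e a) e (lincomb d [seq x - e | x <- a]) ->
  is_ord e a (lincomb d a) (sumn d).
Proof.
move=> size_d [_ not_wBe]; split.
  by exists (0 :: d); split=> //; apply/factorization_cons.
set w := lincomb d [seq x - e | x <- a].
move=> c fact_s; rewrite leqNgt; apply/negP=> /subnKC; set m := _ - _ => def_c.
have [le_cs sBc] := factorization_blowup fact_s.
rewrite -def_c (lincomb_subn size_d ge_a) -/w in le_cs sBc.
case: not_wBe; split; first by nia.
have -> : w - e = sumn d * e + w - ((sumn d).+1 + m) * e + m * e by nia.
exact: gen_add_head.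
Qed.

End Blowup.

Lemma is_ord_max e a s k :
  is_ord e a s k -> k.+1 * e <= s -> ~ gen (e :: a) (s - k.+1 * e).
Proof.
case=> _ max_k le_s [[|d0 d] fact_d]; first by case: fact_d.
have := factorization_add_head k.+1 fact_d; rewrite subnK // => /max_k /=.
lia.
Qed.

Theorem corollary3p5 (S : nat -> Prop) (e : nat) (a : seq nat) :
  numerical_semigroup S ->
  minimal_generators S (e :: a) ->
  (exists N, forall x, adj S e a x -> x < N) /\
  (forall w, apery (blowup e a) e w -> adj S e a w) /\
  (forall x, adj S e a x -> blowup e a x).
Proof.
move=> [_ _ [F conductorF]] [sorted_ea genS _].
have ge_a : {in a, forall x, e <= x}.
  by move=> x a_x; apply: ltnW; apply: (allP (order_path_min ltn_trans sorted_ea)).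
split; [|split].
- exists (F + e) => _ [s [k [_ [ord_s ->]]]]; rewrite ltnNge; apply/negP=> le_Fx.
  by apply: (is_ord_max ord_s); rewrite mulSn; [nia | apply/genS/conductorF; nia].
- move=> w Ap_w; have [d size_d def_w] := apery_blowup_factorization Ap_w.
  exists (lincomb d a), (sumn d); split; last split.
  + by apply/genS; exists (0 :: d); apply/factorization_cons.
  + by apply: is_ord_apery => //; rewrite -def_w.
  + by rewrite def_w (lincomb_subn size_d ge_a) addKn.
- by move=> _ [s [k [_ [ord_s ->]]]]; apply: is_ord_sub_blowup.
Qed.
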